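(* For any integer $r \geq 1$ and any nonnegative integers $n, k$, \[E_r(n,k) = \sum_{\substack{\epsilon \in F(r,n) \\ |\epsilon| = n}} \sum_{\substack{t \in F(r,k) \\ |t| = k}} \binom{n}{\epsilon(1), \epsilon(2), \ldots, \epsilon(r)} \prod_{i=1}^r E(\epsilon(i), t(i)).\]
   Context: $F(r,k)$ denotes the set of functions $\epsilon: \{1, \ldots, r\} \to \{0, 1, \ldots, k\}$, and $|\epsilon| = \sum_i \epsilon(i)$. For $n \geq 1$, $k \geq 0$, the Eulerian number $E(n,k)$ is the number of permutations $w$ of $\{1, \ldots, n\}$ with exactly $k$ descents (indices $i$ with $w(i) > w(i+1)$); by convention $E(n,k) = 0$ whenever $n \leq 0$ or $k \notin \{0, \ldots, n-1\}$. The $r$th order Eulerian number $E_r(n,k)$ is the number of pairs $(w, S)$ with $w$ a permutation of $\{1, \ldots, n\}$ and $S \subset \{1, \ldots, n-1\}$ of size $r-1$ such that exactly $k$ descents of $w$ do not lie in $S$. The multinomial coefficient is $\binom{n}{\epsilon(1),\ldots,\epsilon(r)} = n!/\prod_i \epsilon(i)!$. *)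

From mathcomp Require Import all_boot all_fingroup.
Set Implicit Arguments. Unset Strict Implicit. Unset Printing Implicit Defensive.

(* Value (as a nat) of the permutation w of 'I_n at the 0-based position j;
   0 if j is out of range (never used out of range below). *)
Definition wnat (n : nat) (w : 'S_n) (j : nat) : nat :=
  if @insub nat (fun m => m < n) 'I_n j is Some o then val (w o) else 0.

(* Descent set of w.  The descent at 1-based index i in {1,...,n-1}
   (w(i) > w(i+1)) is represented by the element i-1 of 'I_(n-1);
   i.e. {1,...,n-1} is identified with 'I_(n-1) via i |-> i-1. *)
Definition descents (n : nat) (w : 'S_n) : {set 'I_n.-1} :=
  [set i : 'I_n.-1 | wnat w i.+1 < wnat w i].

(* Eulerian number E(n,k); 0 when n <= 0 (here n = 0). *)
Definition eulerian (n k : nat) : nat :=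
  if n == 0 then 0 else #|[set w : 'S_n | #|descents w| == k]|.

(* r-th order Eulerian number E_r(n,k): pairs (w,S), S subset of {1..n-1}
   of size r-1, with exactly k descents of w outside S.  Same convention
   as E: 0 when n = 0. *)
Definition eulerian_r (r n k : nat) : nat :=
  if n == 0 then 0 else
  #|[set p : 'S_n * {set 'I_n.-1} |
        (#|p.2| == r.-1) && (#|descents p.1 :\: p.2| == k)]|.

Definition multinom (r n : nat) (eps : 'I_r -> nat) : nat :=
  n`! %/ \prod_(i < r) (eps i)`!.

From mathcomp Require Import all_boot all_fingroup.
From mathcomp Require Import zify.
Set Implicit Arguments. Unset Strict Implicit. Unset Printing Implicit Defensive.

(* Cutting a permutation w of {1..n} at a set S of r - 1 positions splits it into
   r nonempty consecutive blocks, and the descents of w outside S are exactly the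
   descents inside the blocks.  Choosing the length m and the set of values of the
   first block ('C(n, m) ways), the descents inside it are those of its
   standardization, counted by E(m, _), and the remaining blocks form an instance
   of the same problem with r - 1 blocks on the other n - m values.  The
   right-hand side obeys the same recursion in r by peeling off the first part of
   the compositions; parts equal to 0 contribute nothing since E(0, _) = 0. *)

Lemma uniq_subset_perm (T : eqType) (s1 s2 : seq T) :
  uniq s1 -> uniq s2 -> {subset s1 <= s2} -> size s2 <= size s1 -> perm_eq s1 s2.
Proof.
move=> u1 u2 s12 le21; apply: uniq_perm => //.
by have [_] := uniq_min_size u1 s12 le21.
Qed.

(** * Descents outside a cut set *)

(* The bits of [b] mark cut points: the descent of [s] between positions [i] and
   [i + 1] is counted only if the [i]-th bit of [b] is false, missing bits being
   false. *)
Fixpoint des_off (b : bitseq) (s : seq nat) : nat :=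
  if s is x :: s' then (~~ head false b && (head x s' < x)) + des_off (behead b) s'
  else 0.

Definition des (s : seq nat) : nat := des_off [::] s.

Lemma des_off_nseq j s : des_off (nseq j false) s = des s.
Proof. by elim: s j => [|x s IHs] [|j] //=; rewrite IHs. Qed.

Lemma des_off_cut j b s :
  des_off (nseq j false ++ true :: b) s = des (take j.+1 s) + des_off b (drop j.+1 s).
Proof.
elim: j s => [|j IHj] [|x s] //=; first by rewrite take0 drop0 /des /= ltnn.
by rewrite IHj addnA; case: s.
Qed.

Lemma des_off_nth b s :
  des_off b s = \sum_(i < (size s).-1) (~~ nth false b i && (nth 0 s i.+1 < nth 0 s i)).
Proof.
elim: s b => [|x s IHs] b; first by rewrite big_ord0.
case: s IHs => [|y s] IHs.
  by rewrite big_ord0 /= ltnn andbF.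
transitivity ((~~ head false b && (y < x)) + des_off (behead b) (y :: s)) => //.
rewrite IHs big_ord_recl; congr (_ + _).
by apply: eq_bigr => i _; rewrite nth_behead.
Qed.

Lemma des_map (f : nat -> nat) s :
  {in s &, forall x y, (f y < f x) = (y < x)} -> des (map f s) = des s.
Proof.
rewrite /des; elim: s => [|x s IHs] //= mono_f.
rewrite IHs => [|y z ys zs]; last by apply: mono_f; rewrite inE ?ys ?zs orbT.
by case: s {IHs} mono_f => [|y s] //= mono_f; rewrite mono_f ?inE ?eqxx ?orbT.
Qed.

Fixpoint masks (L t : nat) : seq bitseq :=
  if L is L'.+1 then
    (if t is t'.+1 then map (cons true) (masks L' t') else [::])
      ++ map (cons false) (masks L' t)
  else if t == 0 then [:: [::]] else [::].

Lemma mem_map_cons (T : eqType) (c : T) (X : seq (seq T)) s :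
  (s \in map (cons c) X) = if s is y :: s' then (y == c) && (s' \in X) else false.
Proof.
case: s => [|y s]; first by apply/mapP => -[].
apply/mapP/andP => [[s' s'X [-> ->]] | [/eqP-> sX]]; last by exists s.
by rewrite eqxx.
Qed.

Lemma mem_masks L t b : (b \in masks L t) = (size b == L) && (count id b == t).
Proof.
elim: L t b => [|L IHL] t [|c b] /=.
- by case: t.
- by case: t; rewrite ?inE.
- by case: t => [|t]; rewrite mem_cat !mem_map_cons.
rewrite mem_cat !mem_map_cons !IHL eqSS.
by case: t => [|t]; case: c; rewrite /= ?mem_map_cons ?IHL ?orbF ?eqSS ?andbF.
Qed.

Lemma uniq_masks L t : uniq (masks L t).
Proof.
have cons_inj (c : bool) : injective (cons c) by move=> ? ? [].
elim: L t => [|L IHL] [|t] //=; first by rewrite map_inj_uniq.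
rewrite cat_uniq !map_inj_uniq ?IHL //= andbT.
by apply/hasP => -[x /mapP[y _ ->] /mapP[z _]].
Qed.

Lemma size_masks L t : size (masks L t) = 'C(L, t).
Proof.
elim: L t => [|L IHL] [|t] //=; rewrite ?size_cat !size_map !IHL ?bin0 //.
by rewrite binS addnC.
Qed.

Lemma masks0 L : masks L 0 = [:: nseq L false].
Proof. by elim: L => //= L ->. Qed.

Lemma big_masksS L t (F : bitseq -> nat) :
  \sum_(b <- masks L t.+1) F b =
  \sum_(j < L) \sum_(b <- masks (L - j.+1) t) F (nseq j false ++ true :: b).
Proof.
elim: L F => [|L IHL] F /=; first by rewrite big_nil big_ord0.
rewrite big_cat !big_map IHL big_ord_recl subn1.
by congr (_ + _); apply: eq_bigr => j _; rewrite subSS.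
Qed.

Fixpoint subseqs (T : Type) (m : nat) (A : seq T) : seq (seq T) :=
  if A is x :: A' then
    (if m is m'.+1 then map (cons x) (subseqs m' A') else [::]) ++ subseqs m A'
  else if m == 0 then [:: [::]] else [::].

Lemma mem_subseqs (T : eqType) m (A B : seq T) :
  (B \in subseqs m A) = subseq B A && (size B == m).
Proof.
elim: A m B => [|x A IHA] m B /=.
  by case: m => [|m]; case: B => //= *; rewrite inE.
rewrite mem_cat IHA; case: B => [|y B] /=.
  by case: m => [|m]; rewrite ?sub0seq //= orbF mem_map_cons.
case: m => [|m]; rewrite ?andbF // eqSS mem_map_cons IHA.
have [->|] := eqVneq y x; last by [].
by rewrite /= -andb_orl (orb_idr (subseq_trans (subseq_cons B x))).
Qed.

Lemma uniq_subseqs (T : eqType) m (A : seq T) : uniq A -> uniq (subseqs m A).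
Proof.
elim: A m => [|x A IHA] m /=; first by case: (m == 0).
case/andP=> xA uA; case: m => [|m] /=; first exact: IHA.
rewrite cat_uniq map_inj_uniq ?IHA //; last by move=> ? ? [].
rewrite andbT; apply/hasP => -[B]; rewrite mem_subseqs => /andP[sBA _].
case/mapP=> B' _ eB; move: sBA; rewrite eB => /mem_subseq/(_ x).
by rewrite mem_head (negbTE xA) => /(_ isT).
Qed.

Lemma size_subseqs (T : Type) m (A : seq T) : size (subseqs m A) = 'C(size A, m).
Proof.
elim: A m => [|x A IHA] [|m] //=; rewrite ?size_cat ?size_map !IHA ?bin0 //.
by rewrite binS addnC.
Qed.

(** * Splitting a permutation after its first block *)

Definition seqD (T : eqType) (A B : seq T) : seq T := [seq x <- A | x \notin B].

Lemma perm_cat_seqD (T : eqType) (A B : seq T) :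
  uniq A -> subseq B A -> perm_eq A (B ++ seqD A B).
Proof.
move=> uA /(subseq_uniqP uA) {1}->; rewrite perm_sym.
exact/permPl/(perm_filterC (mem B) A).
Qed.

Lemma size_seqD (T : eqType) (A B : seq T) :
  uniq A -> subseq B A -> size (seqD A B) = size A - size B.
Proof. by move=> uA sBA; rewrite (perm_size (perm_cat_seqD uA sBA)) size_cat addKn. Qed.

Lemma big_partition_seq (I J : eqType) (s : seq I) (L : seq J) (key : I -> J)
    (F : I -> nat) :
  uniq L -> {in s, forall i, key i \in L} ->
  \sum_(i <- s) F i = \sum_(j <- L) \sum_(i <- s | key i == j) F i.
Proof.
move=> uL keyL; under [RHS]eq_bigr do rewrite big_mkcond.
rewrite exchange_big; apply: eq_big_seq => i si.
rewrite -big_mkcond -big_filter (eq_filter (a2 := pred1 (key i))) => [|j].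
  by rewrite filter_pred1_uniq ?keyL // big_seq1.
exact: eq_sym.
Qed.

Lemma perm_filter_take (T : eqType) m (A s : seq T) :
  uniq A -> perm_eq s A -> perm_eq [seq x <- A | x \in take m s] (take m s).
Proof.
move=> uA sA; apply: uniq_perm; rewrite ?filter_uniq ?take_uniq ?(perm_uniq sA) //.
move=> x; rewrite mem_filter andb_idr // => /mem_take.
by rewrite (perm_mem sA).
Qed.

Lemma perm_permutations_take (T : eqType) m (A B : seq T) :
  uniq A -> B \in subseqs m A ->
  perm_eq [seq s <- permutations A | [seq x <- A | x \in take m s] == B]
          [seq s1 ++ s2 | s1 <- permutations B, s2 <- permutations (seqD A B)].
Proof.
rewrite mem_subseqs => uA /andP[sBA /eqP szB].
have ABD := perm_cat_seqD uA sBA.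
apply: uniq_perm; first by rewrite filter_uniq ?permutations_uniq.
  rewrite allpairs_uniq ?permutations_uniq // => -[s1 s2] [t1 t2] /allpairsP[[? ?] /=].
  rewrite mem_permutations => -[s1B _ [-> _]] /allpairsP[[? ?] /=].
  rewrite mem_permutations => -[t1B _ [-> _]] /= /eqP.
  by rewrite eqseq_cat ?(perm_size s1B) ?(perm_size t1B) // => /andP[/eqP-> /eqP->].
move=> s; rewrite mem_filter mem_permutations; apply/andP/allpairsP.
  case=> /eqP keyB sA; have takeB : perm_eq (take m s) B.
    by rewrite -keyB perm_sym perm_filter_take.
  exists (take m s, drop m s); rewrite /= cat_take_drop !mem_permutations.
  split=> //; rewrite -(perm_cat2l B) -(permPr ABD) -(permPr sA).
  by rewrite -{2}(cat_take_drop m s) perm_cat2r perm_sym.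
case=> -[s1 s2] /=; rewrite !mem_permutations => -[s1B s2D ->].
have sz1 : size s1 = m by rewrite (perm_size s1B).
split; last by rewrite (permPr ABD) perm_cat.
rewrite -sz1 take_size_cat // (eq_filter (a2 := mem B)) => [|x]; last exact: perm_mem.
by rewrite -(subseq_uniqP uA sBA).
Qed.

Lemma big_permutations_split (T : eqType) m (A : seq T) (F : seq T -> seq T -> nat) :
  uniq A -> m <= size A ->
  \sum_(s <- permutations A) F (take m s) (drop m s) =
  \sum_(B <- subseqs m A) \sum_(s1 <- permutations B) \sum_(s2 <- permutations (seqD A B))
    F s1 s2.
Proof.
move=> uA le_mA.
rewrite (big_partition_seq _ (key := fun s => [seq x <- A | x \in take m s])
           (uniq_subseqs m uA)) => [|s]; last first.
  rewrite mem_permutations mem_subseqs filter_subseq => sA.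
  rewrite (perm_size (perm_filter_take m uA sA)) size_takel ?eqxx //.
  by move/perm_size: sA => ->.
apply: eq_big_seq => B BA.
rewrite -big_filter (perm_big _ (perm_permutations_take uA BA)) big_allpairs_dep.
apply: eq_big_seq => s1; rewrite mem_permutations => s1B.
have sz1 : size s1 = m by move: BA; rewrite mem_subseqs (perm_size s1B) => /andP[_ /eqP].
by apply: eq_bigr => s2 _; rewrite -sz1 take_size_cat ?drop_size_cat.
Qed.

(** * Standardization *)

Lemma count_ltn_mono (s : seq nat) x y :
  x \in s -> x < y -> count (fun z => z < x) s < count (fun z => z < y) s.
Proof.
move=> + lt_xy; elim: s => //= z s IHs.
have le_cnt : count (fun z => z < x) s <= count (fun z => z < y) s.
  by apply: sub_count => u /ltn_trans/(_ lt_xy).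
rewrite inE => /predU1P[<- | /IHs lt_cnt]; first by rewrite ltnn lt_xy add1n ltnS.
rewrite -addnS leq_add //.
by have [/ltn_trans/(_ lt_xy)-> | //] := ltnP z x.
Qed.

Lemma perm_map_permutations (T1 T2 : eqType) (f : T1 -> T2) (s : seq T1) :
  uniq s -> {in s &, injective f} ->
  perm_eq (map (map f) (permutations s)) (permutations (map f s)).
Proof.
move=> us inj_f; have ufs : uniq (map f s) by rewrite map_inj_in_uniq.
apply: uniq_subset_perm; rewrite ?permutations_uniq //.
- rewrite map_inj_in_uniq ?permutations_uniq // => t1 t2.
  rewrite !mem_permutations => t1s t2s; apply: (inj_in_map inj_f); apply/allP => x.
    by rewrite (perm_mem t1s).
  by rewrite (perm_mem t2s).
- by move=> u /mapP[t]; rewrite !mem_permutations => ts ->; apply: perm_map.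
- by rewrite size_map (size_permutations us) (size_permutations ufs) size_map.
Qed.

Section Standardization.

Variable B : seq nat.
Hypothesis uB : uniq B.

Let rank x := count (fun y => y < x) B.

Let rank_ltE : {in B &, forall x y, (rank y < rank x) = (y < x)}.
Proof.
move=> x y xB yB; case: (ltngtP y x) => [lt_yx | lt_xy | ->]; last exact: ltnn.
- exact: count_ltn_mono.
- exact/ltn_geF/ltnW/count_ltn_mono.
Qed.

Let rank_inj : {in B &, injective rank}.
Proof.
move=> x y xB yB eq_rank; case: (ltngtP x y) => //.
  by rewrite -(rank_ltE yB xB) eq_rank ltnn.
by rewrite -(rank_ltE xB yB) eq_rank ltnn.
Qed.

Let perm_map_rank : perm_eq (map rank B) (iota 0 (size B)).
Proof.
apply: uniq_subset_perm; rewrite ?iota_uniq ?size_map ?size_iota //.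
  by rewrite map_inj_in_uniq.
move=> u /mapP[x xB ->]; rewrite mem_iota /= /rank -(count_predC (fun y => y < x)).
rewrite -[X in X < _]addn0 ltn_add2l -has_count.
by apply/hasP; exists x; rewrite /= ?ltnn.
Qed.

Lemma big_permutations_rank (F : nat -> nat) :
  \sum_(s <- permutations B) F (des s) =
  \sum_(s <- permutations (iota 0 (size B))) F (des s).
Proof.
transitivity (\sum_(s <- map (map rank) (permutations B)) F (des s)).
  rewrite big_map; apply: eq_big_seq => s; rewrite mem_permutations => sB.
  by rewrite des_map // => x y; rewrite !(perm_mem sB); apply: rank_ltE.
apply/perm_big/(perm_trans (perm_map_permutations uB rank_inj)).
exact: perm_permutations perm_map_rank.
Qed.

End Standardization.

Definition wseq n (w : 'S_n) : seq nat := [seq wnat w j | j <- iota 0 n].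

Lemma wnat_ord n (w : 'S_n) (i : 'I_n) : wnat w i = w i.
Proof. by rewrite /wnat valK. Qed.

Lemma nth_wseq n (w : 'S_n) j : j < n -> nth 0 (wseq w) j = wnat w j.
Proof. by move=> lt_jn; rewrite (nth_map 0) ?size_iota // nth_iota. Qed.

Lemma wseqE n (w : 'S_n) : wseq w = [seq val (w i) | i <- enum 'I_n].
Proof.
by rewrite /wseq -val_enum_ord -map_comp; apply: eq_map => i /=; rewrite wnat_ord.
Qed.

Lemma perm_wseq n (w : 'S_n) : perm_eq (wseq w) (iota 0 n).
Proof.
rewrite wseqE -val_enum_ord (map_comp val w); apply: perm_map.
apply: uniq_perm; rewrite ?map_inj_uniq ?enum_uniq -?enumT ?enum_uniq //.
  exact: perm_inj.
by move=> i; rewrite mem_enum -[i](permKV w) (mem_map perm_inj) mem_enum.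
Qed.

Lemma wseq_inj n : injective (@wseq n).
Proof.
move=> w w' eq_w; apply/permP => i; apply: val_inj.
by have := congr1 (fun s => nth 0 s i) eq_w; rewrite !nth_wseq // !wnat_ord.
Qed.

Lemma big_Sn_permutations n (F : seq nat -> nat) :
  \sum_(w : 'S_n) F (wseq w) = \sum_(s <- permutations (iota 0 n)) F s.
Proof.
rewrite -big_enum -(big_map (@wseq n) xpredT) /=; apply: perm_big.
apply: uniq_subset_perm; rewrite ?permutations_uniq ?map_inj_uniq -?enumT ?enum_uniq //.
- exact: wseq_inj.
- by move=> s /mapP[w _ ->]; rewrite mem_permutations perm_wseq.
- by rewrite size_map -cardE card_Sn size_permutations ?iota_uniq // size_iota.
Qed.

Definition mask_of_set L (S : {set 'I_L}) : bitseq :=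
  [seq i \in S | i <- enum 'I_L].

Lemma size_mask_of_set L (S : {set 'I_L}) : size (mask_of_set S) = L.
Proof. by rewrite size_map size_enum_ord. Qed.

Lemma count_mask_of_set L (S : {set 'I_L}) : count id (mask_of_set S) = #|S|.
Proof. by rewrite count_map -sum1_count big_enum_cond sum1_card. Qed.

Lemma mask_of_set_inj L : injective (@mask_of_set L).
Proof.
move=> S S' eq_mask; apply/setP => i.
have := congr1 (fun b => nth false b i) eq_mask.
by rewrite !(nth_map i) -?enumT ?size_enum_ord ?nth_ord_enum.
Qed.

Lemma mask_of_set0 L : mask_of_set (set0 : {set 'I_L}) = nseq L false.
Proof.
have /all_pred1P-> : all (pred1 false) (mask_of_set (set0 : {set 'I_L})).
  by apply/allP => b /mapP[i _ ->] /=; rewrite inE.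
by rewrite size_map -?enumT size_enum_ord.
Qed.

Lemma big_card_sets_masks L t (G : bitseq -> nat) :
  \sum_(S : {set 'I_L} | #|S| == t) G (mask_of_set S) = \sum_(b <- masks L t) G b.
Proof.
rewrite -big_enum -(big_map (@mask_of_set L) xpredT) /=; apply: perm_big.
apply: uniq_subset_perm; rewrite ?uniq_masks ?map_inj_uniq ?enum_uniq //.
- exact: mask_of_set_inj.
- move=> b /mapP[S]; rewrite mem_enum => /eqP cardS ->.
  by rewrite mem_masks size_mask_of_set count_mask_of_set cardS !eqxx.
- have := card_draws 'I_L t; rewrite card_ord size_map size_masks -cardE => <-.
  by rewrite cardsE; apply/eq_leq/eq_card.
Qed.

Lemma card_descentsD n (w : 'S_n) (S : {set 'I_n.-1}) :
  #|descents w :\: S| = des_off (mask_of_set S) (wseq w).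
Proof.
rewrite -sum1_card big_mkcond des_off_nth size_map size_iota /=.
apply: eq_bigr => i _; rewrite !inE.
have lt_in : i.+1 < n by rewrite -ltn_predRL.
rewrite (nth_map i) -?enumT ?size_enum_ord ?nth_ord_enum //.
by rewrite (nth_wseq w lt_in) (nth_wseq w (ltnW lt_in)) andbC.
Qed.

Lemma eulerian_iota n k :
  0 < n -> eulerian n k = \sum_(s <- permutations (iota 0 n)) (des s == k).
Proof.
case: n => // n _; transitivity (\sum_(w : 'S_n.+1) (des (wseq w) == k)).
  rewrite /eulerian /= -sum1_card big_mkcond; apply: eq_bigr => w _.
  by rewrite inE -(setD0 (descents w)) (card_descentsD w) mask_of_set0 des_off_nseq.
exact: (big_Sn_permutations n.+1 (fun s => nat_of_bool (des s == k))).
Qed.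

Lemma eulerian_permutations B k :
  uniq B -> 0 < size B -> \sum_(s <- permutations B) (des s == k) = eulerian (size B) k.
Proof.
move=> uB nB; rewrite eulerian_iota //.
exact: (big_permutations_rank uB (fun d => d == k)).
Qed.

(** * The recursion in the number of blocks *)

(* [cut_des c A k] is E_(c+1)(size A, k), computed over the permutations of the
   values in [A] instead of those of {1..n}. *)
Definition cut_des c (A : seq nat) k : nat :=
  \sum_(b <- masks (size A).-1 c) \sum_(s <- permutations A) (des_off b s == k).

Lemma eulerian_r_cut_des r n k : 0 < n -> eulerian_r r n k = cut_des r.-1 (iota 0 n) k.
Proof.
case: n => // n _; rewrite /cut_des size_iota /=.
pose G b := \sum_(s <- permutations (iota 0 n.+1)) (des_off b s == k).
transitivity (\sum_(S : {set 'I_n} | #|S| == r.-1) G (mask_of_set S)); last first.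
  exact: big_card_sets_masks.
rewrite /eulerian_r /= -sum1_card big_mkcond /=.
transitivity (\sum_(S : {set 'I_n}) \sum_(w : 'S_n.+1)
                ((#|S| == r.-1) && (#|descents w :\: S| == k) : nat)).
  by rewrite exchange_big pair_big /=; apply: eq_bigr => -[w S] _; rewrite inE.
rewrite [RHS]big_mkcond; apply: eq_bigr => S _.
case: (#|S| == r.-1); last by rewrite big1.
transitivity (\sum_(w : 'S_n.+1) (des_off (mask_of_set S) (wseq w) == k)).
  by apply: eq_bigr => w _; rewrite (card_descentsD w).
exact: (big_Sn_permutations n.+1
          (fun s => nat_of_bool (des_off (mask_of_set S) s == k))).
Qed.

Lemma eqn_add_subn a b n : (a + b == n) = (a <= n) && (b == n - a).
Proof.
have [le_an | lt_na] := leqP a n; last by rewrite gtn_eqF // ltn_addr.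
by rewrite -[X in _ = _ && X](eqn_add2l a) subnKC.
Qed.

Lemma eqn_add_sum a c k :
  ((a + c == k) : nat) = \sum_(i < k.+1) ((a == i) * (c == k - i)).
Proof.
rewrite (eq_bigr (fun i : 'I_k.+1 => if i == a :> nat then (c == k - i) : nat else 0)).
  rewrite -big_mkcond (big_ord1_eq _ (fun j => nat_of_bool (c == k - j))) ltnS.
  by rewrite eqn_add_subn; case: (a <= k).
by move=> i _; rewrite eq_sym; case: eqP; rewrite ?mul1n.
Qed.

Lemma big_eqn_add (I J : Type) (r1 : seq I) (r2 : seq J) (f : I -> nat) (g : J -> nat)
    k :
  \sum_(x <- r1) \sum_(y <- r2) (f x + g y == k) =
  \sum_(i < k.+1) (\sum_(x <- r1) (f x == i)) * \sum_(y <- r2) (g y == k - i).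
Proof.
transitivity (\sum_(i < k.+1) \sum_(x <- r1) \sum_(y <- r2)
                ((f x == i) * (g y == k - i))).
  rewrite [RHS]exchange_big; apply: eq_bigr => x _; rewrite [RHS]exchange_big.
  by apply: eq_bigr => y _; apply: eqn_add_sum.
by apply: eq_bigr => i _; rewrite big_distrl; apply: eq_bigr => x _; rewrite big_distrr.
Qed.

Lemma cut_des0 A k : uniq A -> 0 < size A -> cut_des 0 A k = eulerian (size A) k.
Proof.
move=> uA nA; rewrite /cut_des masks0 big_seq1.
under eq_bigr do rewrite des_off_nseq.
exact: eulerian_permutations.
Qed.

Lemma cut_desS c A k : uniq A -> 0 < size A ->
  cut_des c.+1 A k =
  \sum_(j < (size A).-1) \sum_(B <- subseqs j.+1 A)
    \sum_(i < k.+1) eulerian j.+1 i * cut_des c (seqD A B) (k - i).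
Proof.
move=> uA nA; rewrite {1}/cut_des big_masksS; apply: eq_bigr => j _.
have le_jA : j.+1 <= size A by apply: ltnW; rewrite -ltn_predRL.
transitivity (\sum_(b <- masks ((size A).-1 - j.+1) c) \sum_(B <- subseqs j.+1 A)
   \sum_(s1 <- permutations B) \sum_(s2 <- permutations (seqD A B))
     (des s1 + des_off b s2 == k)).
  apply: eq_bigr => b _; under eq_bigr do rewrite des_off_cut.
  pose F s1 s2 := nat_of_bool (des s1 + des_off b s2 == k).
  exact: (big_permutations_split F uA le_jA).
rewrite exchange_big; apply: eq_big_seq => B.
rewrite mem_subseqs => /andP[sBA /eqP szB].
have uB := subseq_uniq sBA uA.
under eq_bigr do rewrite big_eqn_add.
rewrite exchange_big; apply: eq_bigr => i _.
rewrite -big_distrr eulerian_permutations // ?szB //.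
have -> : (size A).-1 - j.+1 = (size A - j.+1).-1 by lia.
by rewrite /cut_des size_seqD // szB.
Qed.

(** * The multinomial convolution *)

Lemma dvdn_prod_fact_sum r (e : 'I_r -> nat) :
  \prod_(i < r) (e i)`! %| (\sum_(i < r) e i)`!.
Proof.
elim: r e => [|r IHr] e; first by rewrite !big_ord0.
rewrite !big_ord_recl.
rewrite -(bin_fact (leq_addr (\sum_(i < r) e (lift ord0 i)) (e ord0))) addKn.
by apply: dvdn_mull; rewrite dvdn_mul.
Qed.

Lemma divn_fact_add a b d :
  d %| b`! -> (a + b)`! %/ (a`! * d) = 'C(a + b, a) * (b`! %/ d).
Proof.
case/dvdnP=> q def_b; have d_gt0 : 0 < d.
  by rewrite lt0n; apply: contraTneq (fact_gt0 b) => d0; rewrite def_b d0 muln0.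
rewrite -(bin_fact (leq_addr b a)) addKn def_b mulnK // (mulnCA a`!) mulnA.
by rewrite mulnK // muln_gt0 fact_gt0.
Qed.

Definition fcons (T : Type) r (x : T) (g : {ffun 'I_r -> T}) : {ffun 'I_r.+1 -> T} :=
  [ffun i => if unlift ord0 i is Some j then g j else x].

Lemma fcons0 (T : Type) r (x : T) (g : {ffun 'I_r -> T}) : fcons x g ord0 = x.
Proof. by rewrite ffunE unlift_none. Qed.

Lemma fconsS (T : Type) r (x : T) (g : {ffun 'I_r -> T}) i :
  fcons x g (lift ord0 i) = g i.
Proof. by rewrite ffunE liftK. Qed.

Lemma big_ffunS (T : finType) r (P : pred {ffun 'I_r.+1 -> T})
    (F : {ffun 'I_r.+1 -> T} -> nat) :
  \sum_(f | P f) F f =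
  \sum_(x : T) \sum_(g : {ffun 'I_r -> T} | P (fcons x g)) F (fcons x g).
Proof.
rewrite pair_big_dep /= (reindex (fun p : T * {ffun 'I_r -> T} => fcons p.1 p.2)) //.
exists (fun f : {ffun 'I_r.+1 -> T} => (f ord0, [ffun i => f (lift ord0 i)])).
  move=> [x g] _.
  by rewrite fcons0; congr pair; apply/ffunP => i; rewrite ffunE fconsS.
move=> f _; apply/ffunP => i.
by case: (unliftP ord0 i) => [j -> | ->]; rewrite ?fcons0 ?fconsS ?ffunE.
Qed.

Lemma sum_fcons N r (x : 'I_N) (g : {ffun 'I_r -> 'I_N}) :
  \sum_(i < r.+1) (fcons x g i : nat) = x + \sum_(i < r) (g i : nat).
Proof. by rewrite big_ord_recl fcons0; under eq_bigr do rewrite fconsS. Qed.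

Lemma multinom_fcons N r n (x : 'I_N) (g : {ffun 'I_r -> 'I_N}) :
  n = x + \sum_(i < r) (g i : nat) ->
  multinom n (fun i => (fcons x g i : nat)) =
  'C(n, x) * multinom (n - x) (fun i => (g i : nat)).
Proof.
move=> ->; rewrite /multinom addKn big_ord_recl /= fcons0.
under [in X in _ %/ (_ * X)]eq_bigr do rewrite fconsS.
by rewrite divn_fact_add // dvdn_prod_fact_sum.
Qed.

Lemma big_nested_andl (I J : finType) (P : pred I) (Q : I -> pred J)
    (F : I -> J -> nat) :
  \sum_i \sum_(j | P i && Q i j) F i j = \sum_(i | P i) \sum_(j | Q i j) F i j.
Proof.
rewrite [RHS]big_mkcond; apply: eq_bigr => i _.
by case: (P i); rewrite ?big_pred0_eq.
Qed.

Definition eulerian_conv N M r (eps : {ffun 'I_r -> 'I_N}) k : nat :=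
  \sum_(t : {ffun 'I_r -> 'I_M} | \sum_(i < r) (t i : nat) == k)
    \prod_(i < r) eulerian (eps i) (t i).

(* The right-hand side of the theorem, with the bounds [N] and [M] on the parts
   decoupled from [n] and [k] so that they stay fixed along the recursion. *)
Definition multi_eulerian N M r n k : nat :=
  \sum_(eps : {ffun 'I_r -> 'I_N} | \sum_(i < r) (eps i : nat) == n)
    multinom n (fun i => (eps i : nat)) * eulerian_conv M eps k.

Lemma eulerian_conv_fcons N M r (x : 'I_N) (g : {ffun 'I_r -> 'I_N}) k : k < M ->
  eulerian_conv M (fcons x g) k =
  \sum_(j < k.+1) eulerian x j * eulerian_conv M g (k - j).
Proof.
move=> lt_kM; rewrite /eulerian_conv big_ffunS.
transitivity (\sum_(y : 'I_M) \sum_(h : {ffun 'I_r -> 'I_M} |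
                (y < k.+1) && (\sum_(i < r) (h i : nat) == k - y))
   eulerian x y * \prod_(i < r) eulerian (g i) (h i)).
  apply: eq_bigr => y _; apply: eq_big => [h | h _].
    by rewrite sum_fcons eqn_add_subn.
  by rewrite big_ord_recl !fcons0; under eq_bigr do rewrite !fconsS.
rewrite big_nested_andl (big_ord_narrow lt_kM); apply: eq_bigr => j _ /=.
by rewrite big_distrr.
Qed.

Lemma multi_eulerianS N M r n k : n < N -> k < M ->
  multi_eulerian N M r.+1 n k =
  \sum_(m < n.+1) \sum_(j < k.+1)
    'C(n, m) * (eulerian m j * multi_eulerian N M r (n - m) (k - j)).
Proof.
move=> lt_nN lt_kM; rewrite /multi_eulerian big_ffunS.
transitivity (\sum_(x : 'I_N) \sum_(g : {ffun 'I_r -> 'I_N} |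
                (x < n.+1) && (\sum_(i < r) (g i : nat) == n - x))
   'C(n, x) * \sum_(j < k.+1) multinom (n - x) (fun i => (g i : nat)) *
                (eulerian x j * eulerian_conv M g (k - j))).
  apply: eq_bigr => x _; apply: eq_big => [g | g /eqP]; rewrite sum_fcons.
    by rewrite eqn_add_subn.
  by move/esym/multinom_fcons->; rewrite eulerian_conv_fcons // -mulnA big_distrr.
rewrite (big_nested_andl (fun x : 'I_N => x < n.+1)).
rewrite (big_ord_narrow lt_nN); apply: eq_bigr => m _ /=.
rewrite -big_distrr exchange_big -big_distrr; congr (_ * _); apply: eq_bigr => j _ /=.
by rewrite big_distrr; apply: eq_bigr => g _; rewrite mulnCA.
Qed.

Lemma sum_ffun0_const (T : finType) (b : bool) c :
  \sum_(f : {ffun 'I_0 -> T} | b) c = b * c.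
Proof.
case: b; last by rewrite big_pred0_eq.
by rewrite sum_nat_const card_ffun card_ord expn0 mul1n.
Qed.

Lemma multi_eulerian0 N M n k : multi_eulerian N M 0 n k = (n == 0) * (k == 0).
Proof.
rewrite /multi_eulerian (eq_bigl (fun _ => n == 0)) => [|eps]; last first.
  by rewrite big_ord0 eq_sym.
rewrite (eq_bigr (fun _ => nat_of_bool (k == 0))) ?sum_ffun0_const // => eps /eqP ->.
rewrite /eulerian_conv (eq_bigl (fun _ => k == 0)) => [|t]; last first.
  by rewrite big_ord0 eq_sym.
rewrite (eq_bigr (fun _ => 1)) => [|t _]; last by rewrite big_ord0.
by rewrite sum_ffun0_const /multinom !big_ord0 divn1 muln1 mul1n.
Qed.

Lemma multi_eulerian1 N M n k : n < N -> k < M -> multi_eulerian N M 1 n k = eulerian n k.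
Proof.
move=> lt_nN lt_kM; rewrite multi_eulerianS // big_ord_recr /= big1 => [|m _]; last first.
  by rewrite big1 // => j _ /=; rewrite multi_eulerian0 subn_eq0 leqNgt ltn_ord !muln0.
rewrite add0n big_ord_recr /= big1 => [|j _]; last first.
  by rewrite multi_eulerian0 subnn (subn_eq0 k) leqNgt ltn_ord !muln0.
by rewrite add0n multi_eulerian0 !subnn binn mul1n !muln1.
Qed.

Lemma multi_eulerian_n0 N M r k : 0 < N -> k < M -> multi_eulerian N M r.+1 0 k = 0.
Proof.
move=> N_gt0 lt_kM; rewrite multi_eulerianS // big_ord1.
by apply: big1 => j _; rewrite /eulerian /= muln0.
Qed.

Lemma multi_eulerianSS N M r n k : 0 < n -> n < N -> k < M ->
  multi_eulerian N M r.+2 n k =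
  \sum_(j < n.-1) 'C(n, j.+1) *
    \sum_(i < k.+1) eulerian j.+1 i * multi_eulerian N M r.+1 (n - j.+1) (k - i).
Proof.
case: n => // n _ lt_nN lt_kM; rewrite multi_eulerianS // big_ord_recl /=.
rewrite big1 => [|j _]; last by rewrite /eulerian /= muln0.
rewrite add0n big_ord_recr /= [X in _ + X]big1 => [|j _]; last first.
  rewrite /bump /= add1n subnn multi_eulerian_n0 ?muln0 //.
    exact: leq_ltn_trans lt_nN.
  exact: leq_ltn_trans (leq_subr _ _) lt_kM.
by rewrite addn0; apply: eq_bigr => j _; rewrite /bump /= add1n big_distrr.
Qed.

Lemma cut_des_multi_eulerian N M c A k :
  uniq A -> 0 < size A -> size A < N -> k < M ->
  cut_des c A k = multi_eulerian N M c.+1 (size A) k.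
Proof.
elim: c A k => [|c IHc] A k uA nA lt_AN lt_kM.
  by rewrite cut_des0 // multi_eulerian1.
rewrite cut_desS // multi_eulerianSS //; apply: eq_bigr => j _.
have lt_jA : j.+1 < size A by rewrite -ltn_predRL.
pose X := \sum_(i < k.+1)
  eulerian j.+1 i * multi_eulerian N M c.+1 (size A - j.+1) (k - i).
rewrite (eq_big_seq (fun=> X)) => [|B]; last first.
  rewrite mem_subseqs => /andP[sBA /eqP szB]; apply: eq_bigr => i _.
  have sz_rest : size (seqD A B) = size A - j.+1 by rewrite size_seqD // szB.
  rewrite IHc ?sz_rest ?subn_gt0 ?filter_uniq //.
    exact: leq_ltn_trans (leq_subr _ _) lt_AN.
  exact: leq_ltn_trans (leq_subr _ _) lt_kM.
by rewrite big_const_seq count_predT iter_addn_0 size_subseqs mulnC.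
Qed.

Theorem lemma2p6 (r n k : nat) (hr : 1 <= r) :
  eulerian_r r n k =
  \sum_(eps : {ffun 'I_r -> 'I_n.+1} | \sum_(i < r) (eps i : nat) == n)
    \sum_(t : {ffun 'I_r -> 'I_k.+1} | \sum_(i < r) (t i : nat) == k)
      multinom n (fun i => (eps i : nat)) *
      \prod_(i < r) eulerian (eps i) (t i).
Proof.
transitivity (multi_eulerian n.+1 k.+1 r n k); last first.
  by apply: eq_bigr => eps _; rewrite /eulerian_conv big_distrr.
case: r hr => // c _; case: n => [|n]; first by rewrite multi_eulerian_n0.
rewrite eulerian_r_cut_des //.
by rewrite (@cut_des_multi_eulerian n.+2 k.+1) ?iota_uniq ?size_iota.
Qed.
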